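(* Suppose $m=0$ (purely deterministic problem) and, for $\mathfrak{g}\in\{\mathfrak{h},\mathfrak{r},\mathfrak{d}\}$, let $\mathcal{G}(q)=\max\{\mathfrak{g}(\tau):\tau\in T,\ \rho(\tau)\le q\}$. Then for every integer $q\ge1$: $\mathcal{G}(q)=q$ for $\mathfrak{g}=\mathfrak{h}$ (simple iterations); $\mathcal{G}(q)=\lfloor\frac{q+1}{2}\rfloor$ for $\mathfrak{g}=\mathfrak{r}$ (modified Newton iterations); $\mathcal{G}(q)=\lfloor\log_2(q+1)\rfloor$ for $\mathfrak{g}=\mathfrak{d}$ (full Newton iterations).
   Context: With $m=0$, $T$ is the set of rooted trees (all vertices of the single color $0$): the empty tree $\emptyset$ and all $\tau=[\tau_1,\dots,\tau_\kappa]_0$, $\kappa\ge0$, $\tau_j\in T\setminus\{\emptyset\}$ unordered (new root joined to roots of the $\tau_j$; $\bullet_0$ if $\kappa=0$). Order: $\rho(\emptyset)=0$, $\rho([\tau_1,\dots,\tau_\kappa]_0)=1+\sum_j\rho(\tau_j)$ (number of vertices). Maxima over empty sets are $0$. $\mathfrak{h}(\emptyset)=0$, $\mathfrak{h}(\bullet_0)=1$, $\mathfrak{h}([\tau_1,\dots,\tau_\kappa]_0)=1+\max_j\mathfrak{h}(\tau_j)$; $\mathfrak{r}(\emptyset)=0$, $\mathfrak{r}(\bullet_0)=1$, $\mathfrak{r}([\tau_1]_0)=\mathfrak{r}(\tau_1)$, $\mathfrak{r}([\tau_1,\dots,\tau_\kappa]_0)=1+\max_j\mathfrak{r}(\tau_j)$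 for $\kappa\ge2$; $\mathfrak{d}(\emptyset)=0$, $\mathfrak{d}(\bullet_0)=1$, $\mathfrak{d}([\tau_1,\dots,\tau_\kappa]_0)=M$ if exactly one $i$ has $\mathfrak{d}(\tau_i)=M:=\max_j\mathfrak{d}(\tau_j)$, and $M+1$ if at least two indices attain $M$. *)

(* Rooted trees with a single colour (m = 0). *)
From Stdlib Require Import List Arith.
Import ListNotations.

(* Children are stored as a list; all functions below are invariant under
   permutation of the children, so this represents unordered trees. *)
Inductive tree : Type := Node : list tree -> tree.

(* The set T = {empty tree} U {non-empty trees}. *)
Definition T := option tree.

Fixpoint tsize (t : tree) : nat :=
  match t with
  | Node l => 1 + (fix sz (l : list tree) : nat :=
                     match l with [] => 0 | c :: l' => tsize c + sz l' end) l
  end.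

Fixpoint hval (t : tree) : nat :=
  match t with
  | Node l => 1 + (fix mx (l : list tree) : nat :=
                     match l with [] => 0 | c :: l' => Nat.max (hval c) (mx l') end) l
  end.

Definition maxl (l : list nat) : nat := fold_right Nat.max 0 l.

Fixpoint rval (t : tree) : nat :=
  match t with
  | Node [] => 1
  | Node [c] => rval c
  | Node l => 1 + maxl ((fix vs (l : list tree) : list nat :=
                          match l with [] => [] | c :: l' => rval c :: vs l' end) l)
  end.

Fixpoint dval (t : tree) : nat :=
  match t with
  | Node [] => 1
  | Node l =>
      let v := (fix vs (l : list tree) : list nat :=
                  match l with [] => [] | c :: l' => dval c :: vs l' end) l in
      let M := maxl v in
      if 2 <=? count_occ Nat.eq_dec v M then M + 1 else M
  end.

Definition rho (t : T) : nat := match t with None => 0 | Some t => tsize t end.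
Definition h (t : T) : nat := match t with None => 0 | Some t => hval t end.
Definition r (t : T) : nat := match t with None => 0 | Some t => rval t end.
Definition d (t : T) : nat := match t with None => 0 | Some t => dval t end.

Definition is_G (g : T -> nat) (q v : nat) : Prop :=
  (exists tau : T, rho tau <= q /\ g tau = v) /\
  (forall tau : T, rho tau <= q -> g tau <= v).

(* Each of the three orders is paid for by vertices.  Height grows by one
   per vertex, so [h t <= rho t].  For [r], a node with a single child adds
   nothing and a branching node needs a second, non-empty child beside the
   child realising the maximum, so [2 r t <= rho t + 1].  For [d], the order
   only grows when two children share the maximal value [M]; by induction
   each of them has at least [2^M - 1] vertices, so [2^(d t) <= rho t + 1].
   The bounds are attained by paths, by combs (a path with a leaf hanging
   from each inner vertex) and by perfect binary trees respectively. *)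

From Stdlib Require Import List Arith Lia.
Import ListNotations.

Definition tree_nested_ind (P : tree -> Prop)
  (IH : forall l, (forall c, In c l -> P c) -> P (Node l)) : forall t, P t :=
  fix F t := match t with
  | Node l => IH l ((fix G (l : list tree) : forall c, In c l -> P c :=
      match l return forall c, In c l -> P c with
      | [] => fun c Hin => False_ind _ Hin
      | a :: l' => fun c Hin => match Hin with
                    | or_introl e => eq_ind a P (F a) c e
                    | or_intror Hin' => G l' c Hin' end
      end) l) end.

Lemma tsize_Node l : tsize (Node l) = S (list_sum (map tsize l)).
Proof. simpl; f_equal; induction l; simpl; congruence. Qed.

Lemma tsize_pos t : 1 <= tsize t.
Proof. destruct t; rewrite tsize_Node; lia. Qed.

Lemma hval_Node l : hval (Node l) = S (maxl (map hval l)).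
Proof. simpl; f_equal; induction l; simpl; congruence. Qed.

Lemma rval_Node2 a b l :
  rval (Node (a :: b :: l)) = S (maxl (map rval (a :: b :: l))).
Proof.
  assert (Hmap : forall l, (fix vs (l : list tree) : list nat :=
      match l with [] => [] | c :: l' => rval c :: vs l' end) l = map rval l)
    by (induction l0; simpl; congruence).
  cbn [rval]; now rewrite Hmap.
Qed.

Lemma dval_Node a l :
  dval (Node (a :: l)) =
  let M := maxl (map dval (a :: l)) in
  if 2 <=? count_occ Nat.eq_dec (map dval (a :: l)) M then M + 1 else M.
Proof.
  assert (Hmap : forall l, (fix vs (l : list tree) : list nat :=
      match l with [] => [] | c :: l' => dval c :: vs l' end) l = map dval l)
    by (induction l0; simpl; congruence).
  cbn [dval]; now rewrite Hmap.
Qed.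

Lemma maxl_In l : l <> [] -> In (maxl l) l.
Proof.
  induction l as [|a [|b l] IHl]; intros Hl; [congruence| simpl; lia |].
  change (maxl (a :: b :: l)) with (Nat.max a (maxl (b :: l))).
  destruct (Nat.max_spec a (maxl (b :: l))) as [[_ ->]|[_ ->]].
  - right; apply IHl; discriminate.
  - now left.
Qed.

Lemma maxl_map_attained {A} (f : A -> nat) l :
  l <> [] -> exists x, In x l /\ maxl (map f l) = f x.
Proof.
  intros Hl.
  assert (Hin : In (maxl (map f l)) (map f l))
    by (apply maxl_In; destruct l; simpl; congruence).
  apply in_map_iff in Hin as [x [Hx Hxl]]; eauto.
Qed.

Lemma maxl_map_le_sum {A} (f g : A -> nat) l :
  (forall x, In x l -> f x <= g x) -> maxl (map f l) <= list_sum (map g l).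
Proof.
  induction l as [|a l IHl]; intros Hfg; simpl; [lia|].
  specialize (Hfg a (or_introl eq_refl)) as Ha.
  specialize (IHl (fun x Hx => Hfg x (or_intror Hx))); lia.
Qed.

Lemma list_sum_map_In_lt {A} (f : A -> nat) l x :
  (forall y, In y l -> 1 <= f y) -> In x l -> 2 <= length l ->
  f x < list_sum (map f l).
Proof.
  intros Hpos Hx Hlen.
  apply in_split in Hx as [l1 [l2 ->]].
  rewrite map_app, list_sum_app; simpl.
  destruct l1 as [|y l1]; [destruct l2 as [|y l2]; [simpl in Hlen; lia|] |];
    assert (1 <= f y) by (apply Hpos; simpl; auto); simpl; lia.
Qed.

Lemma hval_le_tsize : forall t, hval t <= tsize t.
Proof.
  apply tree_nested_ind; intros l IH.
  rewrite hval_Node, tsize_Node; apply le_n_S, maxl_map_le_sum, IH.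
Qed.

Lemma double_rval_le_tsize_add1 : forall t, 2 * rval t <= tsize t + 1.
Proof.
  apply tree_nested_ind; intros l IH.
  destruct l as [|a [|b l]].
  - simpl; lia.
  - change (rval (Node [a])) with (rval a).
    rewrite tsize_Node; specialize (IH a (or_introl eq_refl)); simpl; lia.
  - rewrite rval_Node2, tsize_Node.
    destruct (maxl_map_attained rval (a :: b :: l)) as [x [Hx ->]]; [discriminate|].
    assert (tsize x < list_sum (map tsize (a :: b :: l))).
    { apply list_sum_map_In_lt; [intros; apply tsize_pos | exact Hx | simpl; lia]. }
    specialize (IH x Hx); lia.
Qed.

Lemma pow_count_dval_le l c :
  (forall x, In x l -> 2 ^ dval x <= tsize x + 1) ->
  (1 <= count_occ Nat.eq_dec (map dval l) c -> 2 ^ c <= list_sum (map tsize l) + 1) /\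
  (2 <= count_occ Nat.eq_dec (map dval l) c -> 2 ^ S c <= list_sum (map tsize l) + 2).
Proof.
  induction l as [|a l IHl]; intros Hl; simpl; [lia|].
  specialize (IHl (fun x Hx => Hl x (or_intror Hx))) as [IH1 IH2].
  specialize (Hl a (or_introl eq_refl)) as Ha.
  destruct (Nat.eq_dec (dval a) c) as [<-|Hne].
  - split; intros Hc; [lia|].
    assert (Hone : 1 <= count_occ Nat.eq_dec (map dval l) (dval a)) by lia.
    specialize (IH1 Hone); simpl; lia.
  - split; intros Hc; [specialize (IH1 Hc)|specialize (IH2 Hc)]; simpl in *; lia.
Qed.

Lemma pow2_dval_le_tsize_add1 : forall t, 2 ^ dval t <= tsize t + 1.
Proof.
  apply tree_nested_ind; intros l IH.
  destruct l as [|a l]; [simpl; lia|].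
  rewrite dval_Node, tsize_Node; cbv zeta.
  set (M := maxl (map dval (a :: l))).
  destruct (pow_count_dval_le (a :: l) M IH) as [Hone Htwo].
  assert (HM : 1 <= count_occ Nat.eq_dec (map dval (a :: l)) M).
  { apply (count_occ_In Nat.eq_dec), maxl_In; discriminate. }
  destruct (Nat.leb_spec 2 (count_occ Nat.eq_dec (map dval (a :: l)) M)) as [H2|_].
  - rewrite Nat.add_1_r; specialize (Htwo H2); lia.
  - specialize (Hone HM); lia.
Qed.

Fixpoint path (n : nat) : tree :=
  match n with 0 => Node [] | S n => Node [path n] end.

Fixpoint comb (n : nat) : tree :=
  match n with 0 => Node [] | S n => Node [comb n; Node []] end.

Fixpoint perfect_binary (n : nat) : tree :=
  match n with 0 => Node [] | S n => Node [perfect_binary n; perfect_binary n] end.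

Lemma path_spec n : tsize (path n) = S n /\ hval (path n) = S n.
Proof. induction n as [|n [Hs Hh]]; simpl in *; lia. Qed.

Lemma comb_spec n : tsize (comb n) = 2 * n + 1 /\ rval (comb n) = S n.
Proof.
  induction n as [|n [Hs Hr]]; [simpl; lia|].
  change (comb (S n)) with (Node [comb n; Node []]).
  rewrite tsize_Node, rval_Node2; simpl; rewrite Hs, Hr; lia.
Qed.

Lemma perfect_binary_spec n :
  tsize (perfect_binary n) + 1 = 2 ^ S n /\ dval (perfect_binary n) = S n.
Proof.
  induction n as [|n [Hs Hd]]; [simpl; lia|].
  change (perfect_binary (S n)) with (Node [perfect_binary n; perfect_binary n]).
  rewrite tsize_Node, dval_Node; simpl; rewrite Hd, Nat.max_id, Nat.max_0_r.
  destruct (Nat.eq_dec (S n) (S n)) as [_|]; [|congruence].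
  simpl in Hs |- *; lia.
Qed.

Lemma is_G_tree (g : T -> nat) q v :
  g None = 0 ->
  (forall t, tsize t <= q -> g (Some t) <= v) ->
  (exists t, tsize t <= q /\ g (Some t) = v) ->
  is_G g q v.
Proof.
  intros Hnone Hle [t Ht]; split; [now exists (Some t)|].
  intros [u|] Hu; [exact (Hle u Hu) | rewrite Hnone; lia].
Qed.

Theorem mainTheorem12 (q : nat) (hq : 1 <= q) :
  is_G h q q /\ is_G r q ((q + 1) / 2) /\ is_G d q (Nat.log2 (q + 1)).
Proof.
  split; [|split]; apply is_G_tree; try reflexivity.
  - intros t Ht; pose proof (hval_le_tsize t); simpl; lia.
  - exists (path (q - 1)); destruct (path_spec (q - 1)); simpl; lia.
  - intros t Ht; pose proof (double_rval_le_tsize_add1 t).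
    apply Nat.div_le_lower_bound; simpl; lia.
  - set (k := (q + 1) / 2).
    assert (2 * k <= q + 1) by (apply Nat.Div0.mul_div_le; lia).
    assert (1 <= k) by (apply Nat.div_le_lower_bound; lia).
    exists (comb (k - 1)); destruct (comb_spec (k - 1)); simpl; lia.
  - intros t Ht; pose proof (pow2_dval_le_tsize_add1 t).
    apply Nat.log2_le_pow2; simpl; lia.
  - set (k := Nat.log2 (q + 1)).
    assert (2 ^ k <= q + 1) by (apply Nat.log2_spec; lia).
    assert (1 <= k) by (apply Nat.log2_le_pow2; simpl; lia).
    exists (perfect_binary (k - 1)); destruct (perfect_binary_spec (k - 1)) as [Hs Hd].
    replace (S (k - 1)) with k in * by lia; simpl; lia.
Qed.
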